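(* Let $\overline{G}$ be the roommate diversity game described in the context. For every outcome $\pi$ of $\overline{G}$ that is not top-type, there exists a top-type outcome $\pi'$ that is more popular than $\pi$, i.e. $\phi(\pi',\pi)>0$.
   Context: In a roommate diversity game with agent set $N=R\cup B$ ($R$ red, $B$ blue) and room size $s$, an outcome is a partition of $N$ into rooms of size $s$; $\pi(a)$ is the room containing $a$ and $\theta(C)=|C\cap R|/|C|$. Each agent $a$ has a trichotomous preference given by a partition of the fractions into sets $D_a^+$ (approved), $D_a^n$ (neutral), $D_a^-$ (disapproved), possibly empty, with approved $\succ$ neutral $\succ$ disapproved and indifference within each set. Agent $a$ prefers $\pi$ to $\pi'$ if it strictly prefers $\theta(\pi(a))$ to $\theta(\pi'(a))$; $N(\pi,\pi')$ is the set of agents preferring $\pi$ to $\pi'$ and $\phi(\pi,\pi')=|N(\pi,\pi')|-|N(\pi',\pi)|$. The game $\overline{G}$: $R=\{r_1,r_2,r_3\}$, $B=\{b_1,\dots,b_6\}$, $s=3$; $r_1$: $D^+=\{1/3\}$, $D^-=\{2/3,1\}$; $r_2,r_3$: $D^+=\{2/3\}$, $D^-=\{1/3,1\}$; $b_1,\dots,b_4$: $D^+=\{1/3\}$, $D^n=\{2/3\}$, $D^-=\{0\}$; $b_5,b_6$: $D^+=\{0\}$, $D^-=\{1/3,2/3\}$ (a red agent is never in a room of fraction $0$, a blue agent never in one of fraction $1$). An outcome is top-type if it equals $\{\{r_1,\hat b_1,\hat b_2\},\{r_2,r_3,\hat b_3\},\{b_5,b_6,\hat b_4\}\}$ for some enumeration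 $\hat b_1,\dots,\hat b_4$ of $\{b_1,b_2,b_3,b_4\}$. *)

From mathcomp Require Import all_boot all_order all_algebra all_fingroup.
Set Implicit Arguments. Unset Strict Implicit. Unset Printing Implicit Defensive.
Import GRing.Theory Num.Theory.
Local Open Scope ring_scope.

(* Agents of the game G-bar: 'I_9, with 0,1,2 = r1,r2,r3 (red) and
   3,...,8 = b1,...,b6 (blue). *)
Definition agent := 'I_9.
Definition red : {set agent} := [set a : agent | (val a < 3)%N].
Definition room_size := 3%N.

Definition r1 : agent := inord 0.
Definition r2 : agent := inord 1.
Definition r3 : agent := inord 2.
(* b i = b_{i+1} *)
Definition b (i : nat) : agent := inord (3 + i).

Definition outcome (P : {set {set agent}}) : Prop :=
  partition P [set: agent] /\ (forall C, C \in P -> #|C| = room_size).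

Definition theta (C : {set agent}) : rat := (#|C :&: red|)%:R / (#|C|)%:R.

Definition room (P : {set {set agent}}) (a : agent) : {set agent} := pblock P a.

(* Trichotomous preferences: approved / neutral sets; everything else is
   disapproved. *)
Definition approved (a : agent) (x : rat) : bool :=
  if (a == r1) then x == 1/3
  else if (a == r2) || (a == r3) then x == 2/3
  else if (a == b 0) || (a == b 1) || (a == b 2) || (a == b 3) then x == 1/3
  else x == 0.

Definition neutral (a : agent) (x : rat) : bool :=
  if (a == b 0) || (a == b 1) || (a == b 2) || (a == b 3) then x == 2/3
  else false.

Definition util (a : agent) (x : rat) : nat :=
  if approved a x then 2 else if neutral a x then 1 else 0.

Definition prefers (a : agent) (P Q : {set {set agent}}) : bool :=
  (util a (theta (room Q a)) < util a (theta (room P a)))%N.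

Definition Npref (P Q : {set {set agent}}) : nat := #|[set a | prefers a P Q]|.
Definition phi (P Q : {set {set agent}}) : int := (Npref P Q)%:Z - (Npref Q P)%:Z.

Definition top_type (P : {set {set agent}}) : Prop :=
  exists s : {perm 'I_4},
    P = [set [set r1; b (s ord0); b (s (inord 1))];
             [set r2; r3; b (s (inord 2))];
             [set b 4; b 5; b (s (inord 3))]].

From mathcomp Require Import all_boot all_order all_algebra all_fingroup zify.
Set Implicit Arguments. Unset Strict Implicit. Unset Printing Implicit Defensive.
Import GRing.Theory Num.Theory.

(* An outcome is determined by which agents share a room, and an agent's
   utility depends only on the number of red agents in its room.  Labelling
   the rooms by 0, 1, 2, with 0 for the room of r1, turns an outcome into a
   word of length 9, and a top-type outcome is determined by the order in
   which b1, ..., b4 fill its rooms; comparing popularity then amounts to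
   counting over the nine agents.  Evaluation shows that for each of the 560
   such words one of the 24 top-type outcomes either has the same rooms or is
   strictly more popular. *)

Section Partitions.

Variable T : finType.
Implicit Types (P Q : {set {set T}}) (D : {set T}).

Lemma partition_eq_pblock P Q D :
  partition P D -> partition Q D -> {in D, pblock P =1 pblock Q} -> P = Q.
Proof.
move=> partP partQ eqPQ.
rewrite -(preim_partition_pblock partP) -(preim_partition_pblock partQ).
apply: eq_in_imset => x Dx; apply/setP => y; rewrite !inE.
by case Dy: (y \in D); rewrite // !eqPQ.
Qed.

Definition blocks_from P (x0 : T) : seq {set T} := pblock P x0 :: rem (pblock P x0) (enum P).

Definition pblock_index P (x0 x : T) : nat := index (pblock P x) (blocks_from P x0).

Lemma perm_blocks_from P x0 : x0 \in cover P -> perm_eq (blocks_from P x0) (enum P).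
Proof. by move=> Px0; rewrite perm_sym perm_to_rem // mem_enum pblock_mem. Qed.

Lemma pblock_index_lt P x0 x : x0 \in cover P -> x \in cover P -> pblock_index P x0 x < #|P|.
Proof.
move=> Px0 Px; have blocksP := perm_blocks_from Px0.
by rewrite cardE -(perm_size blocksP) index_mem (perm_mem blocksP) mem_enum pblock_mem.
Qed.

Lemma mem_pblock_index P x0 x y :
  trivIset P -> x0 \in cover P -> x \in cover P -> y \in cover P ->
  (y \in pblock P x) = (pblock_index P x0 x == pblock_index P x0 y).
Proof.
move=> tiP Px0 Px Py; rewrite -eq_pblock // /pblock_index.
apply/eqP/eqP => [-> // |].
by apply: (index_inj set0); rewrite (perm_mem (perm_blocks_from Px0)) mem_enum pblock_mem.
Qed.

Section ThreeBlocks.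

Variables A B C : {set T}.
Hypothesis one_block : forall x, ((x \in A) + (x \in B) + (x \in C))%N = 1.

Definition block3_label x : nat := if x \in A then 0 else if x \in B then 1 else 2.

Lemma trivIset_set3 : trivIset [set A; B; C].
Proof.
apply/trivIsetP => X Y; rewrite !inE -!orbA => /or3P[]/eqP-> /or3P[]/eqP->;
  rewrite ?eqxx // => _; apply/pred0P => z /=; have := one_block z;
  by case: (z \in A); case: (z \in B); case: (z \in C).
Qed.

Lemma pblock_set3 x :
  pblock [set A; B; C] x = if x \in A then A else if x \in B then B else C.
Proof.
have := one_block x; have tiP := trivIset_set3.
case: ifPn => [xA _ | _]; first by apply: def_pblock; rewrite // !inE eqxx.
case: ifPn => [xB _ | _ xC]; first by apply: def_pblock; rewrite // !inE eqxx orbT.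
by apply: def_pblock; rewrite // ?inE ?eqxx ?orbT //; case: (x \in C) xC.
Qed.

Lemma cover_set3 : cover [set A; B; C] = [set: T].
Proof.
apply/setP => x; rewrite inE; apply/bigcupP; have := one_block x.
case xA: (x \in A); first by exists A; rewrite ?inE ?eqxx.
case xB: (x \in B); first by exists B; rewrite ?inE ?eqxx ?orbT.
by case xC: (x \in C) => // _; exists C; rewrite ?inE ?eqxx ?orbT.
Qed.

Lemma partition_set3 : set0 \notin [set A; B; C] -> partition [set A; B; C] [set: T].
Proof. by move=> nzABC; rewrite /partition cover_set3 eqxx trivIset_set3. Qed.

Lemma mem_pblock_set3 x y :
  (y \in pblock [set A; B; C] x) = (block3_label x == block3_label y).
Proof.
rewrite pblock_set3 /block3_label; have := one_block y.
by case: (x \in A); case: (x \in B); case: (y \in A); case: (y \in B); case: (y \in C).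
Qed.

End ThreeBlocks.

End Partitions.

Lemma eq_inord n (x : 'I_n.+1) m : m <= n -> (x == inord m) = (x == m :> nat).
Proof. by move=> le_mn; rewrite -val_eqE /= inordK. Qed.

Lemma card_ord_count n (D : {set 'I_n}) (p : pred nat) :
  (forall x : 'I_n, (x \in D) = p x) -> #|D| = count p (iota 0 n).
Proof.
move=> memD; rewrite (@eq_card _ _ [pred x : 'I_n | p x]) //.
by rewrite cardE /enum_mem size_filter -val_enum_ord count_map enumT.
Qed.

Lemma exists_perm_nth n (t : seq nat) :
  perm_eq t (iota 0 n.+1) -> exists s : {perm 'I_n.+1}, forall i, s i = nth 0 t i :> nat.
Proof.
move=> tP; have t_lt i : i < n.+1 -> nth 0 t i < n.+1.
  by move=> lt_in; rewrite -[_ < _](mem_iota 0) -(perm_mem tP) mem_nth ?(perm_size tP) ?size_iota.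
have f_inj : injective (fun i : 'I_n.+1 => inord (nth 0 t i) : 'I_n.+1).
  move=> i j /(congr1 val); rewrite /= !inordK ?t_lt // => /eqP.
  by rewrite nth_uniq ?(perm_size tP) ?size_iota ?(perm_uniq tP) ?iota_uniq // => /eqP/val_inj.
by exists (perm f_inj) => i; rewrite permE /= inordK ?t_lt.
Qed.

Fixpoint words (k n : nat) : seq (seq nat) :=
  if n is n'.+1 then [seq x :: w | x <- iota 0 k, w <- words k n'] else [:: [::]].

Lemma words_complete k w : all (gtn k) w -> w \in words k (size w).
Proof.
elim: w => [|x w IHw] //= /andP[lt_xk /IHw w_in].
by apply/allpairsP; exists (x, w); rewrite /= mem_iota.
Qed.

Definition room_labelling (P : {set {set agent}}) (f : nat -> nat) : Prop :=
  forall x y : agent, (y \in room P x) = (f x == f y).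

Lemma outcome_room_card P a : outcome P -> #|room P a| = 3.
Proof.
by case=> /and3P[/eqP covP _ _] card3; apply: card3; rewrite pblock_mem // covP inE.
Qed.

Lemma outcome_card P : outcome P -> #|P| = 3.
Proof.
case=> partP card3; have := card_partition partP.
rewrite cardsT card_ord (eq_bigr (fun=> 3)) // sum_nat_const.
by move=> card9; apply/eqP; rewrite -(eqn_pmul2r (_ : 0 < 3)) // -card9.
Qed.

Lemma room_word_exists P :
  outcome P -> exists w, [/\ w \in words 3 9, nth 0 w 0 = 0 & room_labelling P (nth 0 w)].
Proof.
move=> outP; have [/and3P[/eqP covP tiP _] _] := outP.
have coverP x : x \in cover P by rewrite covP inE.
exists [seq pblock_index P r1 (inord n : agent) | n <- iota 0 9]; split.
- set w := map _ _; have <- : size w = 9 by rewrite size_map size_iota.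
  apply: words_complete; apply/allP => _ /mapP[n _ ->] /=.
  by have := pblock_index_lt (coverP r1) (coverP (inord n)); rewrite (outcome_card outP).
- by rewrite /pblock_index /= eqxx.
- move=> x y; rewrite !(nth_map 0) ?size_iota // !nth_iota // !inord_val.
  exact: mem_pblock_index.
Qed.

Definition util_of_reds (a k : nat) : nat :=
  if a == 0 then (if k == 1 then 2 else 0)
  else if a < 3 then (if k == 2 then 2 else 0)
  else if a < 7 then (if k == 1 then 2 else if k == 2 then 1 else 0)
  else (if k == 0 then 2 else 0).

Lemma util_of_redsE (a : agent) k : k <= 3 -> util a (k%:R / 3%:R)%R = util_of_reds a k.
Proof.
rewrite /util /approved /neutral /r1 /r2 /r3 /b !eq_inord //.
move: (nat_of_ord a) (ltn_ord a) => m lt_m9.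
by case: k => [|[|[|[|//]]]] _; do 9?[case: m lt_m9 => [|m] lt_m9]; vm_compute.
Qed.

Definition reds_with (f : nat -> nat) (a : nat) : nat :=
  count (fun x => (f a == f x) && (x < 3)) (iota 0 9).

Definition label_util (f : nat -> nat) (a : nat) : nat := util_of_reds a (reds_with f a).

Lemma card_room_red P f (a : agent) : room_labelling P f -> #|room P a :&: red| = reds_with f a.
Proof.
by move=> labP; apply: card_ord_count => x; rewrite !inE labP.
Qed.

Lemma util_room P f (a : agent) :
  outcome P -> room_labelling P f -> util a (theta (room P a)) = label_util f a.
Proof.
move=> outP labP; rewrite /theta (outcome_room_card a outP) (card_room_red a labP).
rewrite util_of_redsE // -(card_room_red a labP).
by rewrite -[X in _ <= X](outcome_room_card a outP) subset_leq_card // subsetIl.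
Qed.

Definition label_Npref (f g : nat -> nat) : nat :=
  count (fun a => label_util g a < label_util f a) (iota 0 9).

Lemma Npref_labelling P Q f g :
  outcome P -> outcome Q -> room_labelling P f -> room_labelling Q g ->
  Npref P Q = label_Npref f g.
Proof.
move=> outP outQ labP labQ; apply: card_ord_count => a.
by rewrite inE /prefers (util_room a outP labP) (util_room a outQ labQ).
Qed.

Lemma phi_gt0_labelling P Q f g :
  outcome P -> outcome Q -> room_labelling P f -> room_labelling Q g ->
  (0 < phi Q P)%R = (label_Npref f g < label_Npref g f).
Proof.
move=> outP outQ labP labQ.
rewrite /phi (Npref_labelling outQ outP labQ labP) (Npref_labelling outP outQ labP labQ).
by rewrite subr_gt0 ltz_nat.
Qed.

Definition rooms_of_size3 (f : nat -> nat) : bool :=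
  all (fun x => count (fun y => f x == f y) (iota 0 9) == 3) (iota 0 9).

Lemma room_labelling_size3 P f : outcome P -> room_labelling P f -> rooms_of_size3 f.
Proof.
move=> outP labP; apply/allP => n; rewrite mem_iota add0n => /andP[_ lt_n9].
apply/eqP; rewrite -[RHS](outcome_room_card (Ordinal lt_n9) outP).
by symmetry; apply: card_ord_count => y; rewrite labP.
Qed.

Definition same_rooms (f g : nat -> nat) : bool :=
  all (fun x => all (fun y => (f x == f y) == (g x == g y)) (iota 0 9)) (iota 0 9).

Lemma outcome_eq_labelling P Q f g :
  outcome P -> outcome Q -> room_labelling P f -> room_labelling Q g ->
  same_rooms f g -> P = Q.
Proof.
move=> [partP _] [partQ _] labP labQ /allP same.
apply: (partition_eq_pblock partP partQ) => x _; apply/setP => y.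
rewrite -[_ \in _]/(y \in room P x) -[_ \in pblock Q x]/(y \in room Q x) labP labQ.
have mem_agent (z : agent) : (z : nat) \in iota 0 9 by rewrite mem_iota add0n ltn_ord.
by have /allP/(_ _ (mem_agent y))/eqP := same _ (mem_agent x).
Qed.

(* [t] lists the indices in 0..3 of the enumeration \hat b_1, ..., \hat b_4. *)
Definition top_room1 (t : seq nat) : seq nat := [:: 0; 3 + nth 0 t 0; 3 + nth 0 t 1].
Definition top_room2 (t : seq nat) : seq nat := [:: 1; 2; 3 + nth 0 t 2].
Definition top_room3 (t : seq nat) : seq nat := [:: 7; 8; 3 + nth 0 t 3].

Definition top_label (t : seq nat) (n : nat) : nat :=
  if n \in top_room1 t then 0 else if n \in top_room2 t then 1 else 2.

Lemma top_rooms_partition :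
  all (fun t => all (fun n => (n \in top_room1 t) + (n \in top_room2 t) + (n \in top_room3 t) == 1)
                    (iota 0 9)
             && all (fun r => count (mem r) (iota 0 9) == 3)
                    [:: top_room1 t; top_room2 t; top_room3 t])
      (permutations (iota 0 4)).
Proof. by vm_compute. Qed.

Lemma top_outcome t : t \in permutations (iota 0 4) ->
  exists Q, [/\ outcome Q, top_type Q & room_labelling Q (top_label t)].
Proof.
move=> tP; have [s sE] : exists s : {perm 'I_4}, forall i, s i = nth 0 t i :> nat.
  by apply: exists_perm_nth; rewrite -mem_permutations.
have /allP/(_ t tP)/andP[/allP one /allP card3] := top_rooms_partition.
have s_lt i : 3 + s i <= 8 by have := ltn_ord (s i); lia.
set A := [set r1; b (s ord0); b (s (inord 1))].
set B := [set r2; r3; b (s (inord 2))].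
set C := [set b 4; b 5; b (s (inord 3))].
have memA (x : agent) : (x \in A) = ((x : nat) \in top_room1 t).
  by rewrite !inE /r1 /b !eq_inord ?s_lt // !sE inordK // -!orbA.
have memB (x : agent) : (x \in B) = ((x : nat) \in top_room2 t).
  by rewrite !inE /r2 /r3 /b !eq_inord ?s_lt // !sE inordK // -!orbA.
have memC (x : agent) : (x \in C) = ((x : nat) \in top_room3 t).
  by rewrite !inE /b !eq_inord ?s_lt // !sE inordK // -!orbA.
have one_block (x : agent) : ((x \in A) + (x \in B) + (x \in C))%N = 1.
  by rewrite memA memB memC; apply/eqP/one; rewrite mem_iota add0n ltn_ord.
have card_room r (D : {set agent}) : r \in [:: top_room1 t; top_room2 t; top_room3 t] ->
    (forall x : agent, (x \in D) = ((x : nat) \in r)) -> #|D| = 3.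
  by move=> /card3/eqP card_r memD; rewrite -[RHS]card_r; apply: card_ord_count.
have cardA : #|A| = 3 by apply: card_room memA; rewrite inE eqxx.
have cardB : #|B| = 3 by apply: card_room memB; rewrite !inE eqxx orbT.
have cardC : #|C| = 3 by apply: card_room memC; rewrite !inE eqxx !orbT.
exists [set A; B; C]; split.
- split; last by move=> D; rewrite !inE -!orbA => /or3P[]/eqP->.
  apply: partition_set3 => //; rewrite !inE -!orbA.
  by apply/or3P => -[]/eqP E; [move: cardA | move: cardB | move: cardC]; rewrite -E cards0.
- by exists s.
- by move=> x y; rewrite /room mem_pblock_set3 // /block3_label /top_label !memA !memB.
Qed.

Lemma top_type_more_popular :
  all (fun w => has (fun t => same_rooms (nth 0 w) (top_label t)
                           || (label_Npref (nth 0 w) (top_label t)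
                                 < label_Npref (top_label t) (nth 0 w)))
                    (permutations (iota 0 4)))
      [seq w <- words 3 9 | (nth 0 w 0 == 0) && rooms_of_size3 (nth 0 w)].
Proof. by vm_compute. Qed.

Theorem mainTheorem8 (P : {set {set agent}}) :
  outcome P -> ~ top_type P ->
  exists Q : {set {set agent}}, outcome Q /\ top_type Q /\ (0 < phi Q P)%R.
Proof.
move=> outP not_top; have [w [w_words w0 labP]] := room_word_exists outP.
have w_checked : w \in [seq w <- words 3 9 | (nth 0 w 0 == 0) && rooms_of_size3 (nth 0 w)].
  by rewrite mem_filter w0 eqxx (room_labelling_size3 outP labP).
have /allP/(_ w w_checked)/hasP[t tP] := top_type_more_popular.
have [Q [outQ topQ labQ]] := top_outcome tP.
case/orP => [same | more_popular].
- by case: not_top; rewrite (outcome_eq_labelling outP outQ labP labQ same).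
- by exists Q; rewrite (phi_gt0_labelling outP outQ labP labQ).
Qed.
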